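(* Let $\mathcal{X},\mathcal{Y}$ be finite, $p\in[1,\infty]$, $W$ a channel and $\tilde W$ a false channel from $\mathcal{X}$ to $\mathcal{Y}$, and let $\Delta_p=\|\tilde W-W\|_p$. If $\Delta_p\le\frac14$, then for every distribution $Q$ on $\mathcal{X}$, $$|\tilde I(Q,\tilde W)-I(Q,W)|\le2f_p(\Delta_p),$$ and $$|\tilde C(\tilde W)-C(W)|\le2f_p(\Delta_p),$$ where $f_p(t)=-t\,|\mathcal{Y}|^{1-1/p}\log\left(\frac{t}{|\mathcal{Y}|^{1/p}}\right)$ (with $1/p=0$ for $p=\infty$). Furthermore, $f_p$ is concave and non-decreasing on $[0,\frac14]$.
   Context: A channel is a conditional pmf $W(y|x)$; a false channel is any non-negative function $\tilde W(y|x)$. $I(Q,W)$ is mutual information of $Q(x)W(y|x)$ and $C(W)=\max_QI(Q,W)$. False mutual information: $\tilde I(Q,\tilde W)=\sum_{x,y}Q(x)\tilde W(y|x)\log\frac{\tilde W(y|x)}{\sum_{x'}Q(x')\tilde W(y|x')}$ with $0\log0=0$; false capacity $\tilde C(\tilde W)=\sup_Q\tilde I(Q,\tilde W)$. Norms: $\|f\|_p=(\sum_{x,y}|f(x,y)|^p)^{1/p}$ for $p<\infty$ and $\|f\|_\infty=\max_{x,y}|f(x,y)|$. *)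

From Stdlib Require Import Reals Lra.
Open Scope R_scope.

(* Finite alphabets: X = {0,...,nX-1}, Y = {0,...,nY-1}. *)

Fixpoint sumR (n : nat) (f : nat -> R) : R :=
  match n with
  | O => 0
  | S k => sumR k f + f k
  end.

(* max_{i<n} f i, starting from 0 (used only for non-negative f) *)
Fixpoint maxR (n : nat) (f : nat -> R) : R :=
  match n with
  | O => 0
  | S k => Rmax (maxR k f) (f k)
  end.

(* A (false) channel is given as a function W x y = W(y|x). *)
Definition is_channel (nX nY : nat) (W : nat -> nat -> R) : Prop :=
  (forall x y, (x < nX)%nat -> (y < nY)%nat -> 0 <= W x y) /\
  (forall x, (x < nX)%nat -> sumR nY (fun y => W x y) = 1).

Definition is_false_channel (nX nY : nat) (Wt : nat -> nat -> R) : Prop :=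
  forall x y, (x < nX)%nat -> (y < nY)%nat -> 0 <= Wt x y.

Definition is_distr (nX : nat) (Q : nat -> R) : Prop :=
  (forall x, (x < nX)%nat -> 0 <= Q x) /\ sumR nX Q = 1.

(* sum_{x,y} Q(x)W(y|x) log( W(y|x) / sum_{x'} Q(x')W(y|x') ).
   The convention 0 log 0 = 0 is automatic: when Q(x)W(y|x) = 0 the
   summand is 0 * (...) = 0 in Rocq, whatever the (total) ln returns. *)
Definition false_mi (nX nY : nat) (Q : nat -> R) (W : nat -> nat -> R) : R :=
  sumR nX (fun x => sumR nY (fun y =>
    Q x * W x y * ln (W x y / sumR nX (fun x' => Q x' * W x' y)))).

Definition mutual_info (nX nY : nat) (Q : nat -> R) (W : nat -> nat -> R) : R :=
  false_mi nX nY Q W.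

(* The set of values {I(Q,W) | Q distribution on X}; capacities are its lub. *)
Definition mi_values (nX nY : nat) (W : nat -> nat -> R) (r : R) : Prop :=
  exists Q, is_distr nX Q /\ r = mutual_info nX nY Q W.

Definition false_mi_values (nX nY : nat) (W : nat -> nat -> R) (r : R) : Prop :=
  exists Q, is_distr nX Q /\ r = false_mi nX nY Q W.

Inductive pext : Type := PFin (p : R) | PInf.

Definition valid_p (p : pext) : Prop :=
  match p with PFin q => 1 <= q | PInf => True end.

Definition inv_p (p : pext) : R :=
  match p with PFin q => / q | PInf => 0 end.

(* a^b for a >= 0, b > 0, with 0^b = 0 *)
Definition powR (a b : R) : R :=
  if Rle_dec a 0 then 0 else Rpower a b.

Definition norm_p (p : pext) (nX nY : nat) (f : nat -> nat -> R) : R :=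
  match p with
  | PFin q => powR (sumR nX (fun x => sumR nY (fun y => powR (Rabs (f x y)) q))) (/ q)
  | PInf => maxR nX (fun x => maxR nY (fun y => Rabs (f x y)))
  end.

Definition f_p (p : pext) (nY : nat) (t : R) : R :=
  - t * Rpower (INR nY) (1 - inv_p p) * ln (t / Rpower (INR nY) (inv_p p)).

Definition concave_on (a b : R) (g : R -> R) : Prop :=
  forall u v l, a <= u <= b -> a <= v <= b -> 0 <= l <= 1 ->
    l * g u + (1 - l) * g v <= g (l * u + (1 - l) * v).

Definition nondecreasing_on (a b : R) (g : R -> R) : Prop :=
  forall u v, a <= u <= b -> a <= v <= b -> u <= v -> g u <= g v.

From Stdlib Require Import Reals Lra Lia.
Open Scope R_scope.

(* With [eta t = - t ln t] and [H v = sum_y eta (v y)], the false mutual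
   information splits as [H (Q V) - sum_x Q x * H (V x)], so it suffices to
   control how entropies move under the perturbation [W ~> Wt].  For
   [0 <= a <= 1] and [|a - b| <= 1/4] one has [|eta a - eta b| <= eta |a - b|].
   By Hoelder each row of deviations has sum at most
   [|Y|^(1-1/p) Delta = |Y| m] with [m = Delta / |Y|^(1/p)], and since [eta]
   is concave and nondecreasing on [0, 1/3], the sum of [eta] over such a row
   is at most [|Y| eta m = f_p Delta].  This bounds both the output entropy and
   the averaged conditional entropy, whence the factor 2; the capacities are
   compared through their defining suprema. *)

Lemma sumR_ext n f g : (forall i, (i < n)%nat -> f i = g i) -> sumR n f = sumR n g.
Proof.
  induction n as [|n IH]; intros H; simpl; [reflexivity|].
  rewrite IH by (intros; apply H; lia).
  rewrite H by lia; reflexivity.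
Qed.

Lemma sumR_le n f g : (forall i, (i < n)%nat -> f i <= g i) -> sumR n f <= sumR n g.
Proof.
  induction n as [|n IH]; intros H; simpl; [lra|].
  assert (f n <= g n) by (apply H; lia).
  assert (sumR n f <= sumR n g) by (apply IH; intros; apply H; lia).
  lra.
Qed.

Lemma sumR_plus n f g : sumR n (fun i => f i + g i) = sumR n f + sumR n g.
Proof. induction n as [|n IH]; simpl; [lra|]. rewrite IH; lra. Qed.

Lemma sumR_minus n f g : sumR n (fun i => f i - g i) = sumR n f - sumR n g.
Proof. induction n as [|n IH]; simpl; [lra|]. rewrite IH; lra. Qed.

Lemma sumR_opp n f : sumR n (fun i => - f i) = - sumR n f.
Proof. induction n as [|n IH]; simpl; [lra|]. rewrite IH; lra. Qed.

Lemma sumR_scal n c f : sumR n (fun i => c * f i) = c * sumR n f.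
Proof. induction n as [|n IH]; simpl; [lra|]. rewrite IH; lra. Qed.

Lemma sumR_const n c : sumR n (fun _ => c) = INR n * c.
Proof. induction n as [|n IH]; [simpl; lra|]. cbn [sumR]. rewrite IH, S_INR; lra. Qed.

Lemma Rabs_sumR_le n f : Rabs (sumR n f) <= sumR n (fun i => Rabs (f i)).
Proof.
  induction n as [|n IH]; simpl; [rewrite Rabs_R0; lra|].
  eapply Rle_trans; [apply Rabs_triang|lra].
Qed.

Lemma Rabs_sub_sub_le a b c d : Rabs ((a - b) - (c - d)) <= Rabs (a - c) + Rabs (b - d).
Proof.
  replace ((a - b) - (c - d)) with ((a - c) + - (b - d)) by ring.
  rewrite <- (Rabs_Ropp (b - d)). apply Rabs_triang.
Qed.

Lemma sumR_nonneg n f : (forall i, (i < n)%nat -> 0 <= f i) -> 0 <= sumR n f.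
Proof.
  intros H. replace 0 with (sumR n (fun _ => 0)) by (rewrite sumR_const; lra).
  now apply sumR_le.
Qed.

Lemma sumR_term_le n f i :
  (forall j, (j < n)%nat -> 0 <= f j) -> (i < n)%nat -> f i <= sumR n f.
Proof.
  induction n as [|n IH]; intros H Hi; simpl; [lia|].
  assert (0 <= sumR n f) by (apply sumR_nonneg; intros; apply H; lia).
  destruct (Nat.eq_dec i n) as [->|Hin]; [lra|].
  assert (f i <= sumR n f) by (apply IH; [intros; apply H|]; lia).
  assert (0 <= f n) by (apply H; lia).
  lra.
Qed.

Lemma sumR_swap n m (f : nat -> nat -> R) :
  sumR n (fun x => sumR m (fun y => f x y)) = sumR m (fun y => sumR n (fun x => f x y)).
Proof.
  induction n as [|n IH]; simpl; [rewrite sumR_const; lra|].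
  rewrite IH, <- sumR_plus; reflexivity.
Qed.

Lemma sumR_wavg_le n Q f M :
  (forall i, (i < n)%nat -> 0 <= Q i) -> sumR n Q = 1 ->
  (forall i, (i < n)%nat -> f i <= M) -> sumR n (fun i => Q i * f i) <= M.
Proof.
  intros HQ HQ1 Hf.
  apply Rle_trans with (sumR n (fun i => M * Q i)).
  - apply sumR_le; intros i Hi. rewrite Rmult_comm.
    apply Rmult_le_compat_r; auto.
  - rewrite sumR_scal, HQ1; lra.
Qed.

Lemma maxR_ge n f i : (i < n)%nat -> f i <= maxR n f.
Proof.
  induction n as [|n IH]; intros Hi; simpl; [lia|].
  destruct (Nat.eq_dec i n) as [->|Hin]; [apply Rmax_r|].
  eapply Rle_trans; [apply IH; lia|apply Rmax_l].
Qed.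

Lemma maxR_nonneg n f : 0 <= maxR n f.
Proof.
  induction n as [|n IH]; simpl; [lra|].
  eapply Rle_trans; [apply IH|apply Rmax_l].
Qed.

Lemma ln_le_sub1 x : 0 < x -> ln x <= x - 1.
Proof.
  intros Hx. pose proof (exp_ineq1_le (ln x)) as H.
  rewrite exp_ln in H by exact Hx; lra.
Qed.

Lemma Rmult_ln_sub_le a b : 0 < a -> 0 < b -> a * (ln b - ln a) <= b - a.
Proof.
  intros Ha Hb.
  assert (Hba : 0 < b / a) by (apply Rdiv_lt_0_compat; lra).
  pose proof (ln_le_sub1 _ Hba) as H.
  unfold Rdiv in H; rewrite ln_mult, ln_Rinv in H by (auto; apply Rinv_0_lt_compat; lra).
  apply Rmult_le_compat_l with (r := a) in H; [|lra].
  replace (a * (b * / a - 1)) with (b - a) in H by (field; lra).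
  lra.
Qed.

Lemma ln_le_m1 x : 0 < x <= / 3 -> ln x <= -1.
Proof.
  intros Hx. pose proof exp_le_3. pose proof (exp_pos 1).
  assert (Hxe : 0 < x * exp 1) by (apply Rmult_lt_0_compat; lra).
  pose proof (ln_le_sub1 _ Hxe) as Hl.
  rewrite ln_mult, ln_exp in Hl by lra.
  assert (x * exp 1 <= x * 3) by (apply Rmult_le_compat_l; lra).
  lra.
Qed.

Definition eta (t : R) : R := - t * ln t.

Lemma eta_0 : eta 0 = 0.
Proof. unfold eta; ring. Qed.

Lemma eta_tangent w t :
  0 < w -> 0 <= t -> eta t <= eta w + (-1 - ln w) * (t - w).
Proof.
  intros Hw Ht. destruct (Req_dec t 0) as [->|Ht0].
  - rewrite eta_0; unfold eta; lra.
  - pose proof (Rmult_ln_sub_le t w ltac:(lra) Hw). unfold eta; nra.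
Qed.

Lemma eta_concave u v l : 0 <= u -> 0 <= v -> 0 <= l <= 1 ->
  l * eta u + (1 - l) * eta v <= eta (l * u + (1 - l) * v).
Proof.
  intros Hu Hv Hl. set (w := l * u + (1 - l) * v).
  assert (Hlu : 0 <= l * u) by (apply Rmult_le_pos; lra).
  assert (Hlv : 0 <= (1 - l) * v) by (apply Rmult_le_pos; lra).
  destruct (Req_dec w 0) as [Hw0|Hw0].
  - assert (l * eta u = 0).
    { destruct (Rmult_integral l u) as [->| ->]; [unfold w in Hw0; lra|ring|rewrite eta_0; ring]. }
    assert ((1 - l) * eta v = 0).
    { destruct (Rmult_integral (1 - l) v) as [->| ->]; [unfold w in Hw0; lra|ring|rewrite eta_0; ring]. }
    rewrite Hw0, eta_0; lra.
  - assert (Hw : 0 < w) by (unfold w in *; lra).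
    pose proof (eta_tangent w u Hw Hu) as Tu.
    pose proof (eta_tangent w v Hw Hv) as Tv.
    apply Rmult_le_compat_l with (r := l) in Tu; [|lra].
    apply Rmult_le_compat_l with (r := 1 - l) in Tv; [|lra].
    assert (l * (u - w) + (1 - l) * (v - w) = 0) by (unfold w; ring).
    nra.
Qed.

(* The tangent at [w] has slope [-1 - ln w >= 0] as long as [w <= 1/3]. *)
Lemma eta_nondecreasing u v : 0 <= u -> u <= v -> v <= / 3 -> eta u <= eta v.
Proof.
  intros Hu Huv Hv. destruct (Req_dec v 0) as [Hv0|Hv0].
  - replace u with v by lra; lra.
  - pose proof (eta_tangent v u ltac:(lra) Hu).
    pose proof (ln_le_m1 v ltac:(lra)).
    assert ((-1 - ln v) * (u - v) <= 0) by nra.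
    lra.
Qed.

Lemma eta_subadd u v : 0 <= u -> 0 <= v -> eta (u + v) <= eta u + eta v.
Proof.
  intros Hu Hv.
  destruct (Req_dec u 0) as [->|Hu0]; [rewrite eta_0, Rplus_0_l; lra|].
  destruct (Req_dec v 0) as [->|Hv0]; [rewrite eta_0, Rplus_0_r; lra|].
  assert (ln u <= ln (u + v)) by (left; apply ln_increasing; lra).
  assert (ln v <= ln (u + v)) by (left; apply ln_increasing; lra).
  unfold eta; nra.
Qed.

Lemma eta_sub_le a b : 0 <= b <= a -> a * (a - b) <= / 3 ->
  eta b - eta a <= eta (a - b).
Proof.
  intros Hb Had. set (d := a - b) in *.
  destruct (Req_dec d 0) as [Hd0|Hd0].
  { replace a with b by (unfold d in Hd0; lra). rewrite Hd0, eta_0; lra. }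
  destruct (Req_dec b 0) as [->|Hb0].
  { unfold d in *; rewrite Rminus_0_r in *; rewrite eta_0.
    assert (Ha : 0 < a) by lra.
    pose proof (ln_le_m1 (a * a) ltac:(split; [apply Rmult_lt_0_compat|]; lra)) as Hl.
    rewrite ln_mult in Hl by lra. unfold eta; nra. }
  (* [eta b - eta a = b (ln a - ln b) + d ln a <= d (1 + ln a)] and [ln (a d) <= -1]. *)
  assert (Hd : 0 < d) by (unfold d in *; lra).
  pose proof (Rmult_ln_sub_le b a ltac:(lra) ltac:(lra)).
  pose proof (ln_le_m1 (a * d) ltac:(split; [apply Rmult_lt_0_compat|]; lra)) as Hl.
  rewrite ln_mult in Hl by lra.
  assert (eta b - eta a = b * (ln a - ln b) + d * ln a) by (unfold eta, d; ring).
  assert (eta d = - d * ln d) by reflexivity.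
  assert (d * (1 + ln a + ln d) <= 0) by nra.
  unfold d in *; lra.
Qed.

Lemma Rabs_eta_sub_le a b : 0 <= a <= 1 -> 0 <= b -> Rabs (a - b) <= / 4 ->
  Rabs (eta a - eta b) <= eta (Rabs (a - b)).
Proof.
  (* [eta_sub_le] applies since [5/4 * 1/4 < 1/3]. *)
  intros Ha Hb Hab.
  destruct (Rle_dec b a) as [Hba|Hba].
  - rewrite (Rabs_right (a - b)) in * by lra.
    pose proof (eta_subadd b (a - b) Hb ltac:(lra)) as H1.
    replace (b + (a - b)) with a in H1 by ring.
    pose proof (eta_sub_le a b ltac:(lra) ltac:(nra)).
    apply Rabs_le; lra.
  - rewrite (Rabs_left (a - b)), Ropp_minus_distr in * by lra.
    pose proof (eta_subadd a (b - a) ltac:(lra) ltac:(lra)) as H1.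
    replace (a + (b - a)) with b in H1 by ring.
    pose proof (eta_sub_le b a ltac:(lra) ltac:(nra)).
    apply Rabs_le; lra.
Qed.

(* Every [eta (e i)] lies below the tangent at [m], whose slope is nonnegative;
   summing, the linear part contributes at most [0]. *)
Lemma sumR_eta_le n e m : 0 <= m <= / 3 ->
  (forall i, (i < n)%nat -> 0 <= e i) -> sumR n e <= INR n * m ->
  sumR n (fun i => eta (e i)) <= INR n * eta m.
Proof.
  intros Hm He Hs. destruct (Req_dec m 0) as [->|Hm0].
  - rewrite eta_0, Rmult_0_r, <- (Rmult_0_r (INR n)), <- sumR_const.
    apply sumR_le; intros i Hi.
    pose proof (sumR_term_le n e i He Hi). pose proof (He i Hi).
    replace (e i) with 0 by lra. rewrite eta_0; lra.
  - apply Rle_trans with (sumR n (fun i => eta m + (-1 - ln m) * (e i - m))).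
    { apply sumR_le; intros i Hi. apply eta_tangent; [lra|auto]. }
    rewrite sumR_plus, sumR_const, sumR_scal, sumR_minus, sumR_const.
    pose proof (ln_le_m1 m ltac:(lra)).
    assert ((-1 - ln m) * (sumR n e - INR n * m) <= 0) by nra.
    lra.
Qed.

Definition entropy (n : nat) (v : nat -> R) : R := sumR n (fun y => eta (v y)).

Lemma Rabs_entropy_sub_le n a b m : 0 <= m <= / 3 ->
  (forall i, (i < n)%nat -> 0 <= a i <= 1 /\ 0 <= b i /\ Rabs (b i - a i) <= / 4) ->
  sumR n (fun i => Rabs (b i - a i)) <= INR n * m ->
  Rabs (entropy n b - entropy n a) <= INR n * eta m.
Proof.
  intros Hm Hab Hs. unfold entropy. rewrite <- sumR_minus.
  eapply Rle_trans; [apply Rabs_sumR_le|].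
  apply Rle_trans with (sumR n (fun i => eta (Rabs (b i - a i)))).
  - apply sumR_le; intros i Hi. destruct (Hab i Hi) as (Ha & Hb & Hd).
    rewrite Rabs_minus_sym, (Rabs_minus_sym (b i)) in *.
    now apply Rabs_eta_sub_le.
  - apply sumR_eta_le; auto. intros; apply Rabs_pos.
Qed.

Definition out_distr (nX : nat) (Q : nat -> R) (V : nat -> nat -> R) (y : nat) : R :=
  sumR nX (fun x => Q x * V x y).

(* [0 * ln (0 / s) = 0] whatever [ln] returns at [0], and for [a * b > 0] the
   hypothesis forces [s > 0]. *)
Lemma mul_ln_div a b s : 0 <= a -> 0 <= b -> a * b <= s ->
  a * b * ln (b / s) = a * b * ln b - a * b * ln s.
Proof.
  intros Ha Hb Hs.
  destruct (Req_dec a 0) as [->|Ha0]; [ring|].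
  destruct (Req_dec b 0) as [->|Hb0]; [ring|].
  assert (0 < a * b) by (apply Rmult_lt_0_compat; lra).
  unfold Rdiv. rewrite ln_mult, ln_Rinv by (try apply Rinv_0_lt_compat; lra).
  ring.
Qed.

Lemma false_mi_entropy nX nY Q V :
  (forall x, (x < nX)%nat -> 0 <= Q x) ->
  (forall x y, (x < nX)%nat -> (y < nY)%nat -> 0 <= V x y) ->
  false_mi nX nY Q V =
    entropy nY (out_distr nX Q V) - sumR nX (fun x => Q x * entropy nY (V x)).
Proof.
  intros HQ HV. unfold false_mi, entropy.
  set (S := out_distr nX Q V).
  rewrite (sumR_ext nX _ (fun x => sumR nY (fun y => - (Q x * eta (V x y)))
                                  - sumR nY (fun y => ln (S y) * (Q x * V x y)))).
  2:{ intros x Hx. rewrite <- sumR_minus. apply sumR_ext; intros y Hy.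
      rewrite mul_ln_div; auto.
      - unfold eta, S, out_distr; ring.
      - apply (sumR_term_le nX (fun x' => Q x' * V x' y)); auto.
        intros; apply Rmult_le_pos; auto. }
  rewrite sumR_minus, (sumR_swap nX nY (fun x y => ln (S y) * (Q x * V x y))).
  rewrite (sumR_ext nY _ (fun y => - eta (S y))).
  2:{ intros y Hy. rewrite sumR_scal. unfold eta, S, out_distr; ring. }
  rewrite (sumR_ext nX _ (fun x => - (Q x * sumR nY (fun y => eta (V x y))))).
  2:{ intros x Hx. rewrite sumR_opp, sumR_scal; reflexivity. }
  rewrite !sumR_opp; ring.
Qed.

Lemma Rabs_out_distr_sub_le nX Q V V' y : (forall x, (x < nX)%nat -> 0 <= Q x) ->
  Rabs (out_distr nX Q V' y - out_distr nX Q V y)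
    <= sumR nX (fun x => Q x * Rabs (V' x y - V x y)).
Proof.
  intros HQ. unfold out_distr. rewrite <- sumR_minus.
  eapply Rle_trans; [apply Rabs_sumR_le|].
  apply sumR_le; intros x Hx.
  rewrite <- Rmult_minus_distr_l, Rabs_mult, (Rabs_right (Q x)) by (apply Rle_ge, HQ, Hx).
  lra.
Qed.

Lemma false_mi_sub_le nX nY Q W Wt m : is_distr nX Q -> 0 <= m <= / 3 ->
  (forall x y, (x < nX)%nat -> (y < nY)%nat ->
     0 <= W x y <= 1 /\ 0 <= Wt x y /\ Rabs (Wt x y - W x y) <= / 4) ->
  (forall x, (x < nX)%nat -> sumR nY (fun y => Rabs (Wt x y - W x y)) <= INR nY * m) ->
  Rabs (false_mi nX nY Q Wt - false_mi nX nY Q W) <= 2 * (INR nY * eta m).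
Proof.
  intros [HQ HQ1] Hm HW Hrow.
  rewrite !false_mi_entropy by (auto; intros x y Hx Hy; apply (HW x y Hx Hy)).
  assert (Hout : Rabs (entropy nY (out_distr nX Q Wt) - entropy nY (out_distr nX Q W))
                   <= INR nY * eta m).
  { apply Rabs_entropy_sub_le; auto.
    - intros y Hy. split; [|split].
      + split.
        * apply sumR_nonneg; intros x Hx. apply Rmult_le_pos; [auto|apply (HW x y Hx Hy)].
        * apply sumR_wavg_le; auto. intros x Hx; apply (HW x y Hx Hy).
      + apply sumR_nonneg; intros x Hx. apply Rmult_le_pos; [auto|apply (HW x y Hx Hy)].
      + eapply Rle_trans; [apply Rabs_out_distr_sub_le; auto|].
        apply sumR_wavg_le; auto. intros x Hx; apply (HW x y Hx Hy).
    - eapply Rle_trans; [apply sumR_le; intros y Hy; apply Rabs_out_distr_sub_le; auto|].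
      rewrite <- sumR_swap, (sumR_ext nX _ (fun x => Q x * sumR nY (fun y => Rabs (Wt x y - W x y))))
        by (intros; apply sumR_scal).
      apply sumR_wavg_le; auto. }
  assert (Hcond : Rabs (sumR nX (fun x => Q x * entropy nY (Wt x))
                        - sumR nX (fun x => Q x * entropy nY (W x))) <= INR nY * eta m).
  { rewrite <- sumR_minus. eapply Rle_trans; [apply Rabs_sumR_le|].
    apply Rle_trans with
      (sumR nX (fun x => Q x * Rabs (entropy nY (Wt x) - entropy nY (W x)))).
    { apply sumR_le; intros x Hx.
      rewrite <- Rmult_minus_distr_l, Rabs_mult, (Rabs_right (Q x)) by (apply Rle_ge, HQ, Hx).
      lra. }
    apply sumR_wavg_le; auto. intros x Hx.
    apply Rabs_entropy_sub_le; auto. }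
  eapply Rle_trans; [apply Rabs_sub_sub_le|lra].
Qed.

Lemma powR_nonneg a b : 0 <= powR a b.
Proof.
  unfold powR. destruct (Rle_dec a 0); [lra|]. left; apply exp_pos.
Qed.

Lemma powR_Rpower a b : 0 < a -> powR a b = Rpower a b.
Proof. intros Ha. unfold powR. destruct (Rle_dec a 0); [lra|reflexivity]. Qed.

Lemma powR_le0 a b : a <= 0 -> powR a b = 0.
Proof. intros Ha. unfold powR. destruct (Rle_dec a 0); [reflexivity|lra]. Qed.

(* Concavity of [ln], tested at [z] and [1] with weights [a] and [1 - a]. *)
Lemma powR_le_affine z a : 0 <= z -> 0 < a <= 1 -> powR z a <= a * z + (1 - a).
Proof.
  intros Hz Ha. destruct (Req_dec z 0) as [->|Hz0]; [rewrite powR_le0; lra|].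
  rewrite powR_Rpower by lra. set (m := a * z + (1 - a)).
  assert (Hm : 0 < m) by (unfold m; nra).
  pose proof (Rmult_ln_sub_le m z Hm ltac:(lra)).
  pose proof (Rmult_ln_sub_le m 1 Hm ltac:(lra)). rewrite ln_1 in *.
  assert (m * (a * ln z - ln m) <= 0) by (unfold m in *; nra).
  assert (Hl : a * ln z <= ln m) by nra.
  destruct (Rle_dec (Rpower z a) m) as [|Hlt]; [assumption|].
  exfalso. pose proof (ln_increasing m (Rpower z a) Hm ltac:(lra)).
  rewrite ln_Rpower in *. lra.
Qed.

Lemma powR_mul_powR_inv c z q : 0 < c -> 0 <= z -> 1 <= q ->
  powR (c * powR z q) (/ q) = Rpower c (/ q) * z.
Proof.
  intros Hc Hz Hq. destruct (Req_dec z 0) as [->|Hz0].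
  { rewrite (powR_le0 0), Rmult_0_r, powR_le0 by lra. ring. }
  assert (Hzq : 0 < Rpower z q) by apply exp_pos.
  rewrite (powR_Rpower z), powR_Rpower by (try apply Rmult_lt_0_compat; lra).
  rewrite <- Rpower_mult_distr, Rpower_mult by lra.
  replace (q * / q) with 1 by (field; lra). rewrite Rpower_1 by lra. reflexivity.
Qed.

Lemma Rabs_le_powR_inv z q T : 1 <= q -> powR (Rabs z) q <= T -> Rabs z <= powR T (/ q).
Proof.
  intros Hq HT. destruct (Req_dec (Rabs z) 0) as [E|E].
  { rewrite E; apply powR_nonneg. }
  pose proof (Rabs_pos z).
  assert (Hzq : 0 < powR (Rabs z) q) by (rewrite powR_Rpower by lra; apply exp_pos).
  replace (Rabs z) with (Rpower (powR (Rabs z) q) (/ q)) at 1.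
  - rewrite (powR_Rpower T) by lra.
    apply Rle_Rpower_l; [left; apply Rinv_0_lt_compat|]; lra.
  - rewrite powR_Rpower, Rpower_mult by lra.
    replace (q * / q) with 1 by (field; lra). apply Rpower_1; lra.
Qed.

Lemma Rpower_1_sub_mul x e : 0 < x -> Rpower x (1 - e) * Rpower x e = x.
Proof.
  intros Hx. rewrite <- Rpower_plus. replace (1 - e + e) with 1 by ring.
  now apply Rpower_1.
Qed.

(* Apply [powR_le_affine] to [K/T * |v i|^q] with [K = n], so that the
   rescaled terms average to at most [1]. *)
Lemma sumR_abs_le_holder n q v T : (0 < n)%nat -> 1 <= q ->
  sumR n (fun i => powR (Rabs (v i)) q) <= T ->
  sumR n (fun i => Rabs (v i)) <= Rpower (INR n) (1 - / q) * powR T (/ q).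
Proof.
  intros Hn Hq HT.
  assert (HK : 0 < INR n) by (apply lt_0_INR; lia).
  assert (Hent : forall i, (i < n)%nat -> Rabs (v i) <= powR T (/ q)).
  { intros i Hi. apply Rabs_le_powR_inv; auto. eapply Rle_trans; [|exact HT].
    apply (sumR_term_le n (fun i => powR (Rabs (v i)) q)); auto. intros; apply powR_nonneg. }
  destruct (Rle_dec T 0) as [HT0|HT0].
  { rewrite (powR_le0 T) in * by lra.
    rewrite Rmult_0_r, <- (Rmult_0_r (INR n)), <- sumR_const. now apply sumR_le. }
  set (a := / q). set (K := INR n) in *. set (r := Rpower (K / T) a).
  assert (Ha : 0 < a <= 1).
  { unfold a; split; [apply Rinv_0_lt_compat; lra|].
    rewrite <- Rinv_1; apply Rinv_le_contravar; lra. }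
  assert (HKT : 0 < K / T) by (apply Rdiv_lt_0_compat; lra).
  assert (Hr : r * sumR n (fun i => Rabs (v i)) <= K).
  { rewrite <- sumR_scal.
    apply Rle_trans with (sumR n (fun i => a * (K / T * powR (Rabs (v i)) q) + (1 - a))).
    - apply sumR_le; intros i Hi. unfold r, a.
      rewrite <- powR_mul_powR_inv by (auto; apply Rabs_pos).
      apply powR_le_affine; auto. apply Rmult_le_pos; [lra|apply powR_nonneg].
    - rewrite sumR_plus, sumR_scal, sumR_scal, sumR_const.
      assert (K / T * sumR n (fun i => powR (Rabs (v i)) q) <= K / T * T)
        by (apply Rmult_le_compat_l; lra).
      replace (K / T * T) with K in * by (field; lra). fold K. nra. }
  assert (HrK : Rpower K (1 - a) * Rpower T a * r = K).
  { unfold r. rewrite Rmult_assoc, Rpower_mult_distr by lra.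
    replace (T * (K / T)) with K by (field; lra).
    now apply Rpower_1_sub_mul. }
  assert (0 < r) by apply exp_pos.
  rewrite powR_Rpower by lra. fold a K.
  apply Rmult_le_reg_l with r; auto. nra.
Qed.

Lemma norm_p_nonneg p nX nY D : 0 <= norm_p p nX nY D.
Proof. destruct p; simpl; [apply powR_nonneg|apply maxR_nonneg]. Qed.

Lemma sumR_sumR_powR_row_le nX nY q (D : nat -> nat -> R) x : (x < nX)%nat ->
  sumR nY (fun y => powR (Rabs (D x y)) q)
    <= sumR nX (fun x => sumR nY (fun y => powR (Rabs (D x y)) q)).
Proof.
  intros Hx. apply (sumR_term_le nX (fun x => sumR nY (fun y => powR (Rabs (D x y)) q))); auto.
  intros; apply sumR_nonneg; intros; apply powR_nonneg.
Qed.

Lemma norm_p_entry_le p nX nY D x y : valid_p p -> (x < nX)%nat -> (y < nY)%nat ->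
  Rabs (D x y) <= norm_p p nX nY D.
Proof.
  intros Hp Hx Hy. destruct p as [q|]; simpl in *.
  - apply Rabs_le_powR_inv; auto.
    eapply Rle_trans; [|apply sumR_sumR_powR_row_le; exact Hx].
    apply (sumR_term_le nY (fun y => powR (Rabs (D x y)) q)); auto.
    intros; apply powR_nonneg.
  - eapply Rle_trans; [apply (maxR_ge nY (fun y => Rabs (D x y))); auto|].
    apply (maxR_ge nX (fun x => maxR nY (fun y => Rabs (D x y)))); auto.
Qed.

Lemma norm_p_row_le p nX nY D x : (0 < nY)%nat -> valid_p p -> (x < nX)%nat ->
  sumR nY (fun y => Rabs (D x y)) <= Rpower (INR nY) (1 - inv_p p) * norm_p p nX nY D.
Proof.
  intros HY Hp Hx. destruct p as [q|]; simpl in *.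
  - apply sumR_abs_le_holder; auto. now apply sumR_sumR_powR_row_le.
  - rewrite Rminus_0_r, Rpower_1 by (apply lt_0_INR; lia).
    rewrite <- sumR_const. apply sumR_le; intros y Hy.
    now apply (norm_p_entry_le PInf).
Qed.

Lemma inv_p_bounds p : valid_p p -> 0 <= inv_p p <= 1.
Proof.
  destruct p as [q|]; simpl; intros Hq; [|lra]. split.
  - left; apply Rinv_0_lt_compat; lra.
  - rewrite <- Rinv_1; apply Rinv_le_contravar; lra.
Qed.

Lemma Rpower_ge1 x e : 1 <= x -> 0 <= e -> 1 <= Rpower x e.
Proof.
  intros Hx He. rewrite <- (Rpower_O x) by lra. now apply Rle_Rpower.
Qed.

Lemma Rpower_inv_p_ge1 p n : (0 < n)%nat -> valid_p p -> 1 <= Rpower (INR n) (inv_p p).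
Proof.
  intros Hn Hp. apply Rpower_ge1; [apply (le_INR 1); lia|apply inv_p_bounds, Hp].
Qed.

Lemma f_p_eta p nY t : (0 < nY)%nat ->
  f_p p nY t = INR nY * eta (t / Rpower (INR nY) (inv_p p)).
Proof.
  intros HY. assert (HK : 0 < INR nY) by (apply lt_0_INR; lia).
  assert (Hd : 0 < Rpower (INR nY) (inv_p p)) by apply exp_pos.
  pose proof (Rpower_1_sub_mul (INR nY) (inv_p p) HK) as Hcd.
  unfold f_p, eta. set (c := Rpower (INR nY) (1 - inv_p p)) in *.
  set (d := Rpower (INR nY) (inv_p p)) in *. rewrite <- Hcd. field; lra.
Qed.

Lemma eta_scaled_concave K d b : 0 <= K -> 0 < d ->
  concave_on 0 b (fun t => K * eta (t / d)).
Proof.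
  intros HK Hd u v l Hu Hv Hl.
  replace ((l * u + (1 - l) * v) / d) with (l * (u / d) + (1 - l) * (v / d)) by (field; lra).
  assert (0 < / d) by (apply Rinv_0_lt_compat; lra).
  assert (0 <= u / d) by (unfold Rdiv; nra).
  assert (0 <= v / d) by (unfold Rdiv; nra).
  pose proof (eta_concave (u / d) (v / d) l ltac:(lra) ltac:(lra) Hl).
  nra.
Qed.

Lemma eta_scaled_nondecreasing K d b : 0 <= K -> 0 < d -> b <= d / 3 ->
  nondecreasing_on 0 b (fun t => K * eta (t / d)).
Proof.
  intros HK Hd Hb u v Hu Hv Huv. apply Rmult_le_compat_l; [lra|].
  assert (0 < / d) by (apply Rinv_0_lt_compat; lra).
  apply eta_nondecreasing; unfold Rdiv; [nra|nra|].
  replace (/ 3) with (d / 3 * / d) by (field; lra). nra.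
Qed.

Lemma is_lub_Rabs_sub_le {A : Type} (P : A -> Prop) (f g : A -> R) e C D :
  (forall a, P a -> Rabs (f a - g a) <= e) ->
  is_lub (fun r => exists a, P a /\ r = f a) C ->
  is_lub (fun r => exists a, P a /\ r = g a) D ->
  Rabs (C - D) <= e.
Proof.
  intros Hfg [HCu HCl] [HDu HDl].
  assert (C <= D + e).
  { apply HCl. intros r [a [Ha ->]].
    assert (g a <= D) by (apply HDu; exists a; auto).
    pose proof (Rle_abs (f a - g a)). pose proof (Hfg a Ha). lra. }
  assert (D <= C + e).
  { apply HDl. intros r [a [Ha ->]].
    assert (f a <= C) by (apply HCu; exists a; auto).
    pose proof (Rle_abs (- (f a - g a))). rewrite Rabs_Ropp in *. pose proof (Hfg a Ha). lra. }
  apply Rabs_le; lra.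
Qed.

Lemma f_p_concave_nondecreasing p nY : (0 < nY)%nat -> valid_p p ->
  concave_on 0 (/ 4) (f_p p nY) /\ nondecreasing_on 0 (/ 4) (f_p p nY).
Proof.
  intros HY Hp. pose proof (Rpower_inv_p_ge1 p nY HY Hp).
  assert (0 <= INR nY) by apply pos_INR.
  split.
  - intros u v l Hu Hv Hl. rewrite !(f_p_eta p nY) by exact HY.
    apply (eta_scaled_concave _ _ (/ 4)); auto; lra.
  - intros u v Hu Hv Huv. rewrite !(f_p_eta p nY) by exact HY.
    apply (eta_scaled_nondecreasing _ _ (/ 4)); auto; lra.
Qed.

Lemma channel_output_nonempty nX nY W : (0 < nX)%nat -> is_channel nX nY W -> (0 < nY)%nat.
Proof.
  intros HX [_ HW1]. destruct nY; [|lia].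
  specialize (HW1 0%nat HX); simpl in HW1; lra.
Qed.

Lemma channel_le1 nX nY W x y : is_channel nX nY W -> (x < nX)%nat -> (y < nY)%nat ->
  W x y <= 1.
Proof.
  intros [HW0 HW1] Hx Hy. rewrite <- (HW1 x Hx).
  apply (sumR_term_le nY (fun y => W x y)); auto.
Qed.

(* The row sums of [|Wt - W|] are at most [|Y|^(1-1/p) Delta = |Y| m] with
   [m = Delta / |Y|^(1/p) <= Delta]. *)
Lemma false_mi_sub_le_f_p nX nY p Q W Wt : (0 < nY)%nat -> valid_p p ->
  is_distr nX Q -> is_channel nX nY W -> is_false_channel nX nY Wt ->
  norm_p p nX nY (fun x y => Wt x y - W x y) <= / 4 ->
  Rabs (false_mi nX nY Q Wt - false_mi nX nY Q W)
    <= 2 * f_p p nY (norm_p p nX nY (fun x y => Wt x y - W x y)).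
Proof.
  intros HY Hp HQ HW HWt HD.
  set (Delta := norm_p p nX nY (fun x y => Wt x y - W x y)) in *.
  set (d := Rpower (INR nY) (inv_p p)).
  assert (HK : 0 < INR nY) by (apply lt_0_INR; lia).
  assert (Hd : 1 <= d) by (apply Rpower_inv_p_ge1; auto).
  assert (HD0 : 0 <= Delta) by apply norm_p_nonneg.
  assert (Hdinv : 0 < / d <= 1).
  { split; [apply Rinv_0_lt_compat; lra|rewrite <- Rinv_1; apply Rinv_le_contravar; lra]. }
  rewrite f_p_eta by exact HY. fold d.
  apply false_mi_sub_le; auto.
  - unfold Rdiv; split; nra.
  - intros x y Hx Hy. repeat split; auto.
    + apply (proj1 HW); auto.
    + apply (channel_le1 nX nY W); auto.
    + eapply Rle_trans; [apply (norm_p_entry_le p nX nY (fun x y => Wt x y - W x y))|]; auto.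
  - intros x Hx.
    eapply Rle_trans; [apply (norm_p_row_le p nX nY (fun x y => Wt x y - W x y)); auto|].
    rewrite <- (Rpower_1_sub_mul (INR nY) (inv_p p) HK) at 2. fold d Delta.
    right; field; lra.
Qed.

Theorem lemma8 (nX nY : nat) (p : pext) (W Wt : nat -> nat -> R) :
  (0 < nX)%nat ->
  valid_p p ->
  is_channel nX nY W ->
  is_false_channel nX nY Wt ->
  let Delta := norm_p p nX nY (fun x y => Wt x y - W x y) in
  (Delta <= / 4 ->
     (forall Q, is_distr nX Q ->
        Rabs (false_mi nX nY Q Wt - mutual_info nX nY Q W) <= 2 * f_p p nY Delta) /\
     (forall C Ct, is_lub (mi_values nX nY W) C -> is_lub (false_mi_values nX nY Wt) Ct ->
        Rabs (Ct - C) <= 2 * f_p p nY Delta)) /\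
  concave_on 0 (/ 4) (f_p p nY) /\
  nondecreasing_on 0 (/ 4) (f_p p nY).
Proof.
  intros HX Hp HW HWt Delta.
  pose proof (channel_output_nonempty nX nY W HX HW) as HY.
  split; [|exact (f_p_concave_nondecreasing p nY HY Hp)].
  intros HD.
  assert (HQ : forall Q, is_distr nX Q ->
            Rabs (false_mi nX nY Q Wt - mutual_info nX nY Q W) <= 2 * f_p p nY Delta)
    by (intros Q HQ; now apply false_mi_sub_le_f_p).
  split; [exact HQ|].
  intros C Ct HC HCt.
  exact (is_lub_Rabs_sub_le (is_distr nX) (fun Q => false_mi nX nY Q Wt)
           (fun Q => mutual_info nX nY Q W) _ Ct C HQ HCt HC).
Qed.
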